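(* Let $c<d$ be positive integers with $d\geq 4$, and let $X_{c,d}\subset\mathbb{P}^5$ be the threefold defined by $$x_0^c+x_1^c+x_2^c=x_3^c+x_4^c+x_5^c,\qquad x_0^d+x_1^d+x_2^d=x_3^d+x_4^d+x_5^d.$$ If $\Pi\subset X_{c,d}$ is a plane containing a rational point $[x_0,\dots,x_5]\in\mathbb{P}^5(\mathbb{Q})$ whose coordinates $x_0,\dots,x_5$ are all non-zero and of the same sign, then $\Pi$ is one of the six trivial planes $$x_0=x_i,\quad x_1=x_j,\quad x_2=x_k,$$ where $(i,j,k)$ is a permutation of $(3,4,5)$. *)

(* Complex numbers are modelled as R[i] (= complex R from
   mathcomp-real-closed) for an arbitrary R : realType (any realType is
   isomorphic to the real numbers, so R[i] is the field C). *)
From HB Require Import structures.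
From mathcomp Require Import all_boot all_order all_algebra all_fingroup.
From mathcomp Require Import reals.
From mathcomp Require Import complex.
Set Implicit Arguments. Unset Strict Implicit. Unset Printing Implicit Defensive.
Import Order.TTheory GRing.Theory Num.Theory.
Local Open Scope ring_scope.

(* A point of C^6 (an affine representative of a point of P^5) is a row
   vector v : 'rV[C]_6; its coordinates are v 0 i for i : 'I_6.
   Indices 0,1,2 are x_0,x_1,x_2 (lshift) and 3,4,5 are x_3,x_4,x_5 (rshift). *)
Definition lcoord (i : 'I_3) : 'I_6 := lshift 3 i.
Definition rcoord (i : 'I_3) : 'I_6 := rshift 3 i.

Definition fermat_eq {F : pzRingType} (e : nat) (v : 'rV[F]_6) : Prop :=
  \sum_(i < 3) v 0 (lcoord i) ^+ e = \sum_(i < 3) v 0 (rcoord i) ^+ e.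

Definition in_Xcd {F : pzRingType} (c d : nat) (v : 'rV[F]_6) : Prop :=
  fermat_eq c v /\ fermat_eq d v.

(* A plane of P^5 over F is a 3-dimensional linear subspace of F^6;
   it is contained in X_{c,d} iff all its vectors satisfy the equations. *)
Definition is_plane {F : fieldType} (P : {vspace 'rV[F]_6}) : Prop :=
  \dim P = 3%N.

Definition plane_in_Xcd {F : fieldType} (c d : nat) (P : {vspace 'rV[F]_6}) : Prop :=
  forall v, v \in P -> in_Xcd c d v.

(* The trivial plane  x_0 = x_{3+s 0}, x_1 = x_{3+s 1}, x_2 = x_{3+s 2}
   associated with a permutation s of {0,1,2} (i.e. (i,j,k) a permutation
   of (3,4,5)). *)
Definition in_trivial_plane {F : pzRingType} (s : 'S_3) (v : 'rV[F]_6) : Prop :=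
  forall i : 'I_3, v 0 (lcoord i) = v 0 (rcoord (s i)).

Definition ratvec {F : fieldType} (x : 'I_6 -> rat) : 'rV[F]_6 :=
  \row_(i < 6) ratr (x i).

Definition same_sign_nonzero (x : 'I_6 -> rat) : Prop :=
  (forall i, 0 < x i) \/ (forall i, x i < 0).

From HB Require Import structures.
From mathcomp Require Import all_boot all_order all_algebra all_fingroup.
From mathcomp Require Import reals complex ring zify.
Import Order.TTheory GRing.Theory Num.Theory.
Local Open Scope ring_scope.

(* Write the plane as the row space of a rank-3 matrix B with columns b_j, and the
   rational point as q B, so that x_j = q . b_j is nonzero.  Call j and k equivalent
   when b_j / x_j = b_k / x_k.  Polarizing the degree-d equation at x against at most
   four linear forms that vanish on every column outside the class of i but not on
   b_i (one cross product kills two classes at once) gives that the signed sum of the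
   x_j^d over the class of i is zero.  The x_j^d being positive, every class meets
   both {x_0, x_1, x_2} and {x_3, x_4, x_5}; B having rank 3, there are at least three
   classes.  So the classes are three pairs {x_i, x_(3 + s i)} with equal columns, and
   the plane is contained in, hence equal to, the trivial plane of s. *)

Lemma poly_eq0_of_horner_eq0 (F : numDomainType) (p : {poly F}) :
  (forall s, p.[s] = 0) -> p = 0.
Proof.
move=> p0; apply: (@roots_geq_poly_eq0 _ _ [seq i%:R | i <- iota 0 (size p)]).
- by apply/allP => _ /mapP[i _ ->]; apply/eqP/p0.
- by rewrite map_inj_uniq ?iota_uniq // => i j /eqP; rewrite eqr_nat => /eqP.
- by rewrite size_map size_iota.
Qed.

Lemma sum_linear_coef_eq0 (F : numDomainType) (I : finType) (f y u : I -> F) k :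
  (forall s, \sum_i f i * (y i + s * u i) ^+ k.+1 = 0) ->
  \sum_i f i * (y i ^+ k * u i) = 0.
Proof.
move=> vanish.
pose p : {poly F} := \sum_i f i *: ((u i)%:P * 'X + (y i)%:P) ^+ k.+1.
have p0 : p = 0.
  apply: poly_eq0_of_horner_eq0 => s; rewrite -[RHS](vanish s) horner_sum.
  apply: eq_bigr => i _.
  by rewrite hornerZ horner_exp hornerD hornerM hornerX !hornerC [u i * s]mulrC addrC.
have := congr1 (fun p : {poly F} => p^`().[0]) p0.
rewrite /p /= raddf_sum horner_sum deriv0 horner0 /=.
under eq_bigr => i _.
  rewrite derivZ deriv_exp !derivE /= hornerZ.
  (* retype the multiple at {poly F} so that hornerMn matches *)
  rewrite -[_ *+ _]/((_ : {poly F}) *+ _) hornerMn !hornerE /= [u i * _]mulrC mulrnAr.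
  over.
by cbv beta; rewrite sumrMnl => /eqP; rewrite mulrn_eq0 => /eqP.
Qed.

Lemma polarization {F : numFieldType} {n} {w : 'I_n -> F} {d} {P : {vspace 'rV[F]_n}} :
  (forall v, v \in P -> \sum_j w j * v 0 j ^+ d = 0) ->
  forall (us : seq 'rV[F]_n) y, all (mem P) us -> y \in P -> (size us <= d)%N ->
  \sum_j w j * (y 0 j ^+ (d - size us) * \prod_(u <- us) u 0 j) = 0.
Proof.
move=> form0; elim=> [|u us IH] y /=.
  by move=> _ /form0; under eq_bigr do rewrite subn0 big_nil mulr1.
case/andP=> uP usP yP lt_d.
transitivity (\sum_j (w j * \prod_(v <- us) v 0 j) *
                     (y 0 j ^+ (d - (size us).+1) * u 0 j)).
  by apply: eq_bigr => j _; rewrite big_cons; ring.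
apply: sum_linear_coef_eq0 => s; rewrite subnSK //.
rewrite -[RHS](IH (y + s *: u)) ?rpredD ?rpredZ 1?ltnW //.
by apply: eq_bigr => j _; rewrite !mxE; ring.
Qed.

Local Notation o0 := (@Ordinal 3 0 isT).
Local Notation o1 := (@Ordinal 3 1 isT).
Local Notation o2 := (@Ordinal 3 2 isT).

Lemma ord3P (k : 'I_3) : [\/ k = o0, k = o1 | k = o2].
Proof.
by case: k => -[|[|[]]] // ?; [apply: Or31 | apply: Or32 | apply: Or33]; apply: val_inj.
Qed.

Lemma ord3_third (i i' : 'I_3) : i != i' ->
  exists k, forall t : 'I_3, [|| t == i, t == i' | t == k].
Proof.
by case: (ord3P i) => ->; case: (ord3P i') => -> // _;
  [exists o2 | exists o1 | exists o2 | exists o0 | exists o1 | exists o0];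
  move=> t; case: (ord3P t) => ->.
Qed.

Lemma sum_ord3 (V : nmodType) (f : 'I_3 -> V) : \sum_k f k = f o0 + f o1 + f o2.
Proof.
by rewrite !big_ord_recr big_ord0 /= add0r; congr (f _ + f _ + f _); apply: val_inj.
Qed.

Section Vec3.
Context {F : comPzRingType}.
Implicit Types u v w : 'rV[F]_3.

Definition dot3 u v : F := u 0 o0 * v 0 o0 + u 0 o1 * v 0 o1 + u 0 o2 * v 0 o2.

Definition row3 (a b c : F) : 'rV[F]_3 := \row_k [:: a; b; c]`_k.

Definition cross3 u v : 'rV[F]_3 :=
  row3 (u 0 o1 * v 0 o2 - u 0 o2 * v 0 o1)
       (u 0 o2 * v 0 o0 - u 0 o0 * v 0 o2)
       (u 0 o0 * v 0 o1 - u 0 o1 * v 0 o0).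

Lemma dot3Zr u v a : dot3 u (a *: v) = a * dot3 u v.
Proof. by rewrite /dot3 !mxE; ring. Qed.

Lemma dot3_subZl u v w a b : dot3 (a *: u - b *: v) w = a * dot3 u w - b * dot3 v w.
Proof. by rewrite /dot3 !mxE; ring. Qed.

Lemma dot3_deltal k v : dot3 (delta_mx 0 k) v = v 0 k.
Proof. by rewrite /dot3 !mxE; case: (ord3P k) => -> /=; ring. Qed.

Lemma dot3_cross3l u v : dot3 (cross3 u v) u = 0.
Proof. by rewrite /dot3 !mxE /=; ring. Qed.

Lemma dot3_cross3r u v : dot3 (cross3 u v) v = 0.
Proof. by rewrite /dot3 !mxE /=; ring. Qed.

Lemma dot3_cross3C u v w : dot3 (cross3 u v) w = dot3 (cross3 v w) u.
Proof. by rewrite /dot3 !mxE /=; ring. Qed.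

Lemma cross3_cross3 u v w :
  cross3 w (cross3 u v) = dot3 w v *: u - dot3 w u *: v.
Proof. by apply/rowP => k; rewrite /dot3 !mxE; case: (ord3P k) => -> /=; ring. Qed.

Lemma cross3_eq0_proportional w u v :
  cross3 u v = 0 -> dot3 w u *: v = dot3 w v *: u.
Proof.
move=> uv0; apply/eqP; rewrite eq_sym -subr_eq0 -cross3_cross3 uv0.
by apply/eqP/rowP => k; rewrite !mxE; case: (ord3P k) => -> /=; ring.
Qed.

Definition colv {n} (B : 'M[F]_(3, n)) (j : 'I_n) : 'rV[F]_3 := \row_k B k j.

Lemma mulmx_dot3 n (c : 'rV[F]_3) (B : 'M[F]_(3, n)) j :
  (c *m B) 0 j = dot3 c (colv B j).
Proof. by rewrite mxE sum_ord3 /dot3 !mxE. Qed.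

End Vec3.

Lemma exists_orthogonal3 {F : fieldType} (u v : 'rV[F]_3) :
  exists2 c : 'rV[F]_3, c != 0 & dot3 c u = 0 /\ dot3 c v = 0.
Proof.
pose A := row_mx u^T v^T.
have /rowV0Pn[c /sub_kermxP cA c_neq0] : kermx A != 0.
  rewrite kermx_eq0 /row_free; apply: contraTneq isT => r3.
  by have := rank_leq_col A; rewrite r3.
exists c => //; move/eqP: cA; rewrite mul_mx_row row_mx_eq0 => /andP[cu cv].
have dotE w : dot3 c w = (c *m w^T) 0 0.
  by rewrite mulmx_dot3; congr dot3; apply/rowP => k; rewrite !mxE.
by rewrite !dotE (eqP cu) (eqP cv) mxE.
Qed.

Lemma vspace_basis_matrix {F : fieldType} {m n} {P : {vspace 'rV[F]_n}} :
  \dim P = m ->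
  exists2 B : 'M[F]_(m, n), row_free B & forall v, v \in P <-> exists c, v = c *m B.
Proof.
move=> dimP; pose X := tcast dimP (vbasis P).
have basisX : basis_of P X by rewrite val_tcast vbasisP.
pose B : 'M[F]_(m, n) := \matrix_k X`_k.
have mulB c : c *m B = \sum_k c 0 k *: X`_k.
  by rewrite mulmx_sum_row; under eq_bigr do rewrite rowK.
exists B.
  apply/inj_row_free => c; rewrite mulB => c0; apply/rowP => k; rewrite mxE.
  exact: (freeP (basis_free basisX)) _ c0 k.
move=> v; split=> [vP | [c ->]].
  exists (\row_k coord X k v); rewrite mulB {1}(coord_basis basisX vP).
  by apply: eq_bigr => k _; rewrite mxE.
rewrite mulB; apply: rpred_sum => k _; apply/rpredZ/(basis_mem basisX)/mem_nth.
by rewrite size_tuple.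
Qed.

Lemma prod_seq_mull (R : comPzSemiRingType) (I : Type) (r : seq I) (a : R) (f : I -> R) :
  \prod_(i <- r) (a * f i) = a ^+ size r * \prod_(i <- r) f i.
Proof.
elim: r => [|i r IH]; first by rewrite !big_nil mulr1.
by rewrite !big_cons IH exprS mulrACA.
Qed.

Definition coord_equiv {F : fieldType} {n} (B : 'M[F]_(3, n)) (q : 'rV[F]_3) (i j : 'I_n) :=
  dot3 q (colv B i) *: colv B j == dot3 q (colv B j) *: colv B i.

Section CoordinateClasses.
Context {F : fieldType} {n : nat} {B : 'M[F]_(3, n)} {q : 'rV[F]_3}.
Hypothesis B_free : row_free B.
Local Notation b := (colv B).
Local Notation x j := (dot3 q (colv B j)).
Local Notation coord_equiv := (coord_equiv B q).
Hypothesis x_neq0 : forall j, x j != 0.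

Lemma coord_equiv_refl : reflexive coord_equiv.
Proof. by move=> i; rewrite /coord_equiv. Qed.

Lemma coord_equiv_sym : symmetric coord_equiv.
Proof. by move=> i j; rewrite /coord_equiv eq_sym. Qed.

Lemma coord_equiv_trans : transitive coord_equiv.
Proof.
move=> j i k /eqP ij /eqP jk; apply/eqP/(scalerI (x_neq0 j)).
rewrite scalerA (mulrC (x j)) -scalerA jk scalerA (mulrC (x i)) -scalerA ij.
by rewrite !scalerA mulrC.
Qed.

Lemma dot3_coord_equiv c i j :
  coord_equiv i j -> x i * dot3 c (b j) = x j * dot3 c (b i).
Proof. by move=> /eqP ij; rewrite -!dot3Zr ij. Qed.

Lemma coord_equiv_dot3_eq0 c i j :
  coord_equiv i j -> dot3 c (b i) = 0 -> dot3 c (b j) = 0.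
Proof.
move=> /(dot3_coord_equiv c) ij ci0; apply/eqP.
by rewrite -(mulrI_eq0 _ (mulfI (x_neq0 i))) ij ci0 mulr0.
Qed.

Lemma dot3_cols_eq0 c : (forall j, dot3 c (b j) = 0) -> c = 0.
Proof.
move=> c0; apply: (row_free_inj B_free); apply/rowP => j.
by rewrite mul0mx mulmx_dot3 c0 mxE.
Qed.

Lemma coord_equiv_cross3 i j : cross3 (b i) (b j) = 0 -> coord_equiv i j.
Proof. by rewrite /coord_equiv => /(cross3_eq0_proportional q) ->. Qed.

Lemma separating_form i j :
  ~~ coord_equiv i j -> exists2 c, dot3 c (b j) = 0 & dot3 c (b i) != 0.
Proof.
move=> nij; have [k ijk] : exists k, (x i *: b j) 0 k != (x j *: b i) 0 k.
  apply/existsP; apply: contraNT nij => /existsPn ij.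
  by apply/eqP/rowP => k; apply/eqP/negPn/ij.
exists (x j *: delta_mx 0 k - b j 0 k *: q); rewrite dot3_subZl !dot3_deltal.
  by rewrite mulrC subrr.
by move: ijk; rewrite !mxE subr_eq0 eq_sym (mulrC (B k j)).
Qed.

Lemma separating_form2 i a : ~~ coord_equiv i a ->
  exists c, [/\ ~~ coord_equiv i c, c != a & dot3 (cross3 (b a) (b c)) (b i) != 0].
Proof.
move=> ia; have cross_ia : cross3 (b i) (b a) != 0.
  by apply: contraNneq ia => /coord_equiv_cross3.
have [c cross_c] : exists c, dot3 (cross3 (b i) (b a)) (b c) != 0.
  apply/existsP; apply: contraNT cross_ia => /existsPn cross0.
  by apply/eqP/dot3_cols_eq0 => j; apply/eqP/negPn/cross0.
exists c; split; last by rewrite -dot3_cross3C.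
  apply: contra cross_c => ic.
  by apply/eqP/(coord_equiv_dot3_eq0 _ _ _ ic); rewrite dot3_cross3l.
by apply: contraNneq cross_c => ->; rewrite dot3_cross3r.
Qed.

Lemma separating_forms i : exists us : seq 'rV[F]_3,
  [/\ (size us <= n - 2)%N, forall u, u \in us -> dot3 u (b i) != 0
    & forall j, ~~ coord_equiv i j -> exists2 u, u \in us & dot3 u (b j) = 0].
Proof.
pose O := [set j | ~~ coord_equiv i j].
have card_O : (#|O| <= n.-1)%N.
  rewrite -[n in n.-1]card_ord -(cardsC1 i) subset_leq_card //; apply/subsetP => j.
  by rewrite !inE; apply: contraNneq => ->; rewrite coord_equiv_refl.
have [O0 | [a aO]] := set_0Vmem O.
  by exists [::]; split=> // j ij; have := in_set0 j; rewrite -O0 inE ij.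
have ia : ~~ coord_equiv i a by rewrite inE in aO.
have [c [ic ca cross_i]] := separating_form2 i a ia.
have sepP j : exists u : 'rV[F]_3,
    ~~ coord_equiv i j -> dot3 u (b j) = 0 /\ dot3 u (b i) != 0.
  have [ij|/separating_form[u ? ?]] := boolP (coord_equiv i j); first by exists 0.
  by exists u.
have [sep {}sepP] := fin_all_exists sepP.
exists (cross3 (b a) (b c) :: [seq sep j | j <- enum (O :\ a :\ c)]); split.
- rewrite /= size_map -cardE; move: card_O.
  by rewrite (cardsD1 a O) (cardsD1 c (O :\ a)) aO in_setD1 ca inE ic /=; lia.
- move=> u; rewrite inE => /predU1P[-> //|/mapP[j]].
  by rewrite mem_enum !inE => /and3P[_ _ ij] ->; case: (sepP j ij).
move=> j ij; have [->|ja] := eqVneq j a.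
  by exists (cross3 (b a) (b c)); rewrite ?inE ?eqxx ?dot3_cross3l.
have [->|jc] := eqVneq j c.
  by exists (cross3 (b a) (b c)); rewrite ?inE ?eqxx ?dot3_cross3r.
exists (sep j); last by case: (sepP j ij).
by rewrite inE map_f ?orbT // mem_enum !inE ja jc.
Qed.

Lemma coord_classes_not_two u w : ~ (forall j, coord_equiv u j || coord_equiv w j).
Proof.
move=> cover; have [c c_neq0 [cu cw]] := exists_orthogonal3 (b u) (b w).
apply/(negP c_neq0)/eqP/dot3_cols_eq0 => j.
by case/orP: (cover j) => /coord_equiv_dot3_eq0; apply.
Qed.

Lemma coord_class_sum_eq0 (w : 'I_n -> F) d : (n - 2 <= d)%N ->
  (forall us : seq 'rV[F]_3, (size us <= d)%N ->
     \sum_j w j * (x j ^+ (d - size us) * \prod_(u <- us) dot3 u (b j)) = 0) ->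
  forall i, \sum_(j | coord_equiv i j) w j * x j ^+ d = 0.
Proof.
move=> le_d polar i; have [us [size_us us_i us_sep]] := separating_forms i.
have le_us_d := leq_trans size_us le_d.
set K := \prod_(u <- us) dot3 u (b i).
have K_neq0 : K != 0 by rewrite prodf_seq_neq0; apply/allP => u /us_i.
have := polar us le_us_d; rewrite (bigID (coord_equiv i)) /=.
rewrite [X in _ + X]big1 ?addr0 => [sum0 | j /us_sep[u u_us u_j]]; last first.
  by rewrite (big_rem u u_us) /= u_j mul0r !mulr0.
apply: (mulIf K_neq0); rewrite mul0r -[RHS](mulr0 (x i ^+ size us)) -[in RHS]sum0.
rewrite mulr_suml mulr_sumr; apply: eq_bigr => j ij.
have scale : x i ^+ size us * \prod_(u <- us) dot3 u (b j) = x j ^+ size us * K.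
  by rewrite -!prod_seq_mull; apply: eq_bigr => u _; apply: dot3_coord_equiv.
have -> : x j ^+ d = x j ^+ (d - size us) * x j ^+ size us by rewrite -exprD subnK.
by rewrite 2![x i ^+ _ * (_ * _)]mulrCA scale; ring.
Qed.

End CoordinateClasses.

Lemma ord6P (j : 'I_6) : (exists t, j = lcoord t) \/ (exists t, j = rcoord t).
Proof.
case: (splitP (j : 'I_(3 + 3))) => t jt; [left | right]; exists t; exact: val_inj.
Qed.

Lemma lcoord_neq_rcoord i k : lcoord i != rcoord k.
Proof.
by apply/eqP => /(congr1 val) /= ik; move: (ltn_ord i); rewrite ik ltnNge leq_addr.
Qed.

Lemma lcoord_inj : injective lcoord. Proof. exact: lshift_inj. Qed.
Lemma rcoord_inj : injective rcoord. Proof. exact: (@rshift_inj 3 3). Qed.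

Definition eps {R : pzRingType} (j : 'I_6) : R := if (j < 3)%N then 1 else -1.

Lemma eps_lcoord {R : pzRingType} i : eps (lcoord i) = 1 :> R.
Proof. by rewrite /eps /= ltn_ord. Qed.

Lemma eps_rcoord {R : pzRingType} i : eps (rcoord i) = -1 :> R.
Proof. by []. Qed.

Lemma fermat_eq_signed_sum {R : pzRingType} {e} {v : 'rV[R]_6} :
  fermat_eq e v -> \sum_j eps j * v 0 j ^+ e = 0.
Proof.
rewrite /fermat_eq (@big_split_ord _ _ _ 3 3) /= => eq_e.
under eq_bigr do rewrite eps_lcoord mul1r.
by under [X in _ + X]eq_bigr do rewrite eps_rcoord mulN1r; rewrite sumrN eq_e subrr.
Qed.

Section SignedMatching.
Context {R : numDomainType} {e : rel 'I_6} {y : 'I_6 -> R}.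
Hypotheses (e_refl : reflexive e) (e_sym : symmetric e) (e_trans : transitive e).
Hypothesis not_two_classes : forall u w, ~ (forall j, e u j || e w j).
Hypothesis y_gt0 : forall j, 0 < y j.
Hypothesis class_sum_eq0 : forall i, \sum_(j | e i j) eps j * y j = 0.

Lemma class_meets_other_side i : exists2 j, e i j & (j < 3)%N != (i < 3)%N.
Proof.
apply/exists_inP; apply: contraT => /exists_inPn same_side.
have : \sum_(j | e i j) eps j * y j = eps i * \sum_(j | e i j) y j.
  rewrite mulr_sumr; apply: eq_bigr => j ij.
  by move: (same_side j ij); rewrite negbK /eps => /eqP ->.
rewrite class_sum_eq0 => /esym/eqP; rewrite mulf_eq0 => /orP[|].
  by rewrite /eps; case: ifP => _; rewrite ?oppr_eq0 oner_eq0.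
rewrite gt_eqF // (bigD1 i) //= ltr_pwDl ?y_gt0 ?sumr_ge0 // => j _.
exact: ltW.
Qed.

Lemma class_meets_left j : exists t, e j (lcoord t).
Proof.
case: (ord6P j) => -[t ->]; first by exists t.
have [k tk side] := class_meets_other_side (rcoord t).
by case: (ord6P k) tk side => -[u ->] tk //; exists u.
Qed.

Lemma class_meets_right j : exists t, e j (rcoord t).
Proof.
case: (ord6P j) => -[t ->]; last by exists t.
have [k tk side] := class_meets_other_side (lcoord t).
by case: (ord6P k) tk side => -[u ->] tk; [rewrite /= !ltn_ord | exists u].
Qed.

Lemma covering_inequiv (f : 'I_3 -> 'I_6) : (forall j, exists t, e j (f t)) ->
  forall i i', i != i' -> ~~ e (f i) (f i').
Proof.
move=> cover i i' ii'; apply/negP => e_ii'.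
have [k third] := ord3_third _ _ ii'.
apply: (@not_two_classes (f i) (f k)) => j; have [t jt] := cover j.
rewrite e_sym in jt; case/or3P: (third t) jt => /eqP -> jt.
- by rewrite jt.
- by rewrite (e_trans _ _ _ e_ii' jt).
- by rewrite jt orbT.
Qed.

Lemma signed_matching : exists s : 'S_3,
  forall i, e (lcoord i) (rcoord (s i)) /\ y (lcoord i) = y (rcoord (s i)).
Proof.
have left_inequiv := covering_inequiv _ class_meets_left.
have right_inequiv := covering_inequiv _ class_meets_right.
have [s sP] := fin_all_exists (fun i => class_meets_right (lcoord i)).
have s_inj : injective s.
  move=> i i' ss'; apply/eqP; apply: contraTT (sP i) => /left_inequiv ii'.
  by apply: contraNN ii' => e_is; rewrite (e_trans _ _ _ e_is) // e_sym ss' sP.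
exists (perm s_inj) => i; rewrite permE; split=> //.
have := class_sum_eq0 (lcoord i).
rewrite (bigD1 (lcoord i)) ?e_refl // (bigD1 (rcoord (s i))) /=; last first.
  by rewrite sP eq_sym lcoord_neq_rcoord.
rewrite big1 ?addr0 => [|j /andP[/andP[ij jl] jr]].
  by rewrite eps_lcoord eps_rcoord mul1r mulN1r => /eqP; rewrite subr_eq0 => /eqP.
case: (ord6P j) ij jl jr => -[t ->] ij jl jr.
  rewrite (inj_eq lcoord_inj) in jl.
  by move: (left_inequiv _ _ jl); rewrite e_sym ij.
rewrite (inj_eq rcoord_inj) in jr.
have e_ti : e (rcoord t) (lcoord i) by rewrite e_sym.
by move: (right_inequiv _ _ jr); rewrite (e_trans _ _ _ e_ti (sP i)).
Qed.

End SignedMatching.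

Lemma rmorph_eps (R S : pzRingType) (f : {rmorphism R -> S}) j : f (eps j) = eps j.
Proof. by rewrite /eps; case: ifP => _; rewrite ?rmorph1 ?rmorphN1. Qed.

Lemma trivial_plane_of_cols (F : fieldType) (B : 'M[F]_(3, 6)) (s : 'S_3) :
  row_free B -> (forall i, colv B (lcoord i) = colv B (rcoord (s i))) ->
  forall v : 'rV[F]_6, (exists c, v = c *m B) <-> in_trivial_plane s v.
Proof.
move=> B_free cols v; split=> [[c ->] i | v_triv].
  by rewrite !mulmx_dot3 cols.
have cols_r t : colv B (rcoord t) = colv B (lcoord (s^-1 t)%g) by rewrite cols permKV.
pose L : 'M[F]_3 := \matrix_(k, i) B k (lcoord i).
have mulL c i : (c *m L) 0 i = dot3 c (colv B (lcoord i)).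
  by rewrite mulmx_dot3; congr dot3; apply/rowP => k; rewrite !mxE.
have L_unit : L \in unitmx.
  rewrite -row_free_unit; apply/inj_row_free => c cL0.
  apply: (dot3_cols_eq0 B_free) => j.
  by case: (ord6P j) => -[t ->]; rewrite ?cols_r -mulL cL0 mxE.
exists ((\row_i v 0 (lcoord i)) *m invmx L); apply/rowP => j.
rewrite mulmx_dot3; case: (ord6P j) => -[t ->]; rewrite ?cols_r -mulL mulmxKV // mxE //.
by rewrite v_triv permKV.
Qed.

Lemma plane_through_positive_point {F : numFieldType} {d} {P : {vspace 'rV[F]_6}}
    (x : 'I_6 -> rat) :
  (4 <= d)%N -> \dim P = 3%N -> (forall v, v \in P -> fermat_eq d v) ->
  (forall i, 0 < x i) -> ratvec x \in P ->
  exists s : 'S_3, forall v, v \in P <-> in_trivial_plane s v.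
Proof.
move=> le4d dimP PX x_gt0 xP.
have [B B_free memB] := vspace_basis_matrix dimP.
have [q xq] := (memB _).1 xP.
have xE j : dot3 q (colv B j) = ratr (x j) by rewrite -mulmx_dot3 -xq mxE.
have x_neq0 j : dot3 q (colv B j) != 0 by rewrite xE fmorph_eq0 gt_eqF.
have polar (us : seq 'rV[F]_3) : (size us <= d)%N ->
    \sum_j eps j * (dot3 q (colv B j) ^+ (d - size us) *
                    \prod_(u <- us) dot3 u (colv B j)) = 0.
  move=> le_us; have form0 v (vP : v \in P) := fermat_eq_signed_sum (PX v vP).
  rewrite -[RHS](polarization form0 [seq u *m B | u <- us] _ _ xP) ?size_map //.
    apply: eq_bigr => j _; rewrite big_map xE mxE; congr (_ * (_ * _)).
    by apply: eq_bigr => u _; rewrite mulmx_dot3.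
  by apply/allP => _ /mapP[u _ ->]; apply/memB; exists u.
have class_sum i : \sum_(j | coord_equiv B q i j) eps j * x j ^+ d = 0 :> rat.
  apply/eqP; rewrite -(fmorph_eq0 (@ratr F)) rmorph_sum; apply/eqP.
  rewrite -[RHS](coord_class_sum_eq0 B_free x_neq0 _ _ _ polar i) //.
  by apply: eq_bigr => j _; rewrite rmorphM rmorphXn rmorph_eps xE.
have [s sP] := signed_matching coord_equiv_refl coord_equiv_sym
  (coord_equiv_trans x_neq0) (coord_classes_not_two B_free x_neq0)
  (fun j => exprn_gt0 d (x_gt0 j)) class_sum.
have x_eq i : x (lcoord i) = x (rcoord (s i)).
  by apply: (pexpIrn (leq_trans _ le4d) _ _ (sP i).2); rewrite // nnegrE ltW.
exists s => v; rewrite memB; apply: trivial_plane_of_cols => // i.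
move: (sP i).1; rewrite /coord_equiv !xE x_eq => /eqP/scalerI -> //.
by rewrite fmorph_eq0 gt_eqF.
Qed.

Theorem mainTheorem5 (R : realType) (c d : nat)
    (hc : (0 < c)%N) (hcd : (c < d)%N) (hd : (4 <= d)%N)
    (P : {vspace 'rV[R[i]]_6})
    (hP : is_plane P) (hPX : plane_in_Xcd c d P)
    (x : 'I_6 -> rat) (hx : same_sign_nonzero x) (hxP : ratvec x \in P) :
  exists s : 'S_3, forall v : 'rV[R[i]]_6, v \in P <-> in_trivial_plane s v.
Proof.
have PX v : v \in P -> fermat_eq d v by case/hPX.
have [x_gt0 | x_lt0] := hx; first exact: plane_through_positive_point x hd hP PX x_gt0 hxP.
apply: (plane_through_positive_point (fun i => - x i) hd hP PX).
  by move=> i; rewrite oppr_gt0.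
have -> : ratvec (fun i => - x i) = - ratvec x :> 'rV[R[i]]_6.
  by apply/rowP => j; rewrite !mxE rmorphN.
by rewrite rpredN.
Qed.
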